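(* The virtual knot invariant $F_K(t,s)$, which takes values in an abelian group, is a (Kauffman) finite-type invariant of degree one. Concretely: <ul> <li>for every virtual knot diagram $K$ with exactly two singular crossings, $$\sum_{\sigma\in\{0,1\}^2}(-1)^{|\sigma|}F_{K_\sigma}(t,s)=0;$$</li> <li>one is the minimal $n$ for which the analogous identity holds for all diagrams with $n+1$ singular crossings.</li> </ul>
   Context: A virtual knot invariant $f$ with values in an abelian group is a finite-type invariant of degree $\le n$ if the following holds. For every oriented virtual knot diagram $K$ with exactly $n+1$ singular crossings (transverse double points, in addition to real and virtual crossings), $$\sum_{\sigma\in\{0,1\}^{n+1}}(-1)^{|\sigma|}f(K_\sigma)=0.$$ Here $|\sigma|$ is the number of ones in $\sigma$, and $K_\sigma$ is obtained by replacing the $i$-th singular crossing with a positive crossing if $\sigma_i=0$ and a negative crossing if $\sigma_i=1$. The degree of $f$ is the minimal such $n$. The Gauss diagram of an oriented virtual knot diagram is built as follows. Take a counterclockwise-oriented circle. For each real crossing, join its two preimages by a chord directed from over- to undercrossing, labeled with the writhe $w(c)=\pm1$. Put $w(K)=\sum_c w(c)$. Let $d$ be a chord intersecting a chord $c$ (endpoints interleave). We say $d$ crosses $c$ from left to right if, viewing $c$ along its direction, the tail of $d$ lies on the left and its head on the right; right to left is the opposite. Let $r_1,\dots,r_n$ be the chords crossing $c$ from left to right and $l_1,\dots,l_m$ those crossing from right to left. Then $\mathrm{Ind}(c)=\sum_i w(r_i)-\sum_j w(l_j)$. Put $N=|\mathrm{Ind}(c)|$ and let $\phi$ be reduction mod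 $N$ into $\{0,\dots,N-1\}$ if $N\ge1$, and the identity if $N=0$. Define $$g_c(s)=\sum_i w(r_i)s^{\phi(\mathrm{Ind}(r_i))}-\sum_j w(l_j)s^{\phi(-\mathrm{Ind}(l_j))}.$$ Call Laurent polynomials $p,q\in\mathbb{Z}[s,s^{-1}]$ equivalent if $p(1)=q(1)$ and $p\equiv q\pmod{s^{|p(1)|}-1}$. Write $t^{[p]}$ for the corresponding basis element of the free abelian group on equivalence classes. Then $$F_K(t,s)=\sum_c w(c)\,t^{[g_c(s)]}-w(K)\,t^{[0]},$$ summing over all real crossings. $F_K(t,s)$ is invariant under generalized Reidemeister moves. *)

From mathcomp Require Import all_boot all_order all_algebra.
Set Implicit Arguments. Unset Strict Implicit. Unset Printing Implicit Defensive.
Import Order.TTheory GRing.Theory Num.Theory.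
Local Open Scope ring_scope.

(* A monomial (a, e) stands for a * s^e. *)
Definition LP := seq (int * int).

Definition lcoef (p : LP) (e : int) : int := \sum_(m <- p | m.2 == e) m.1.

Definition ev1 (p : LP) : int := \sum_(m <- p) m.1.

(* p ~ q  iff  p(1) = q(1)  and  p - q = (s^N - 1) * h in Z[s,s^-1], N = |p(1)|.
   The coefficient of s^e in (s^N - 1) h is h_(e-N) - h_e. *)
Definition equivLP (p q : LP) : Prop :=
  ev1 p = ev1 q /\
  exists h : LP, forall e : int,
    lcoef p e - lcoef q e = lcoef h (e - `|ev1 p|) - lcoef h e.

(* An element is a formal sum  sum_k a_k t^[p_k], given by a list of (a_k, p_k). *)
Definition FAG := seq (int * LP).

(* fmult x S m : the total coefficient of the class [x] in S is m. *)
Inductive fmult (x : LP) : FAG -> int -> Prop :=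
| fm_nil : fmult x [::] 0
| fm_in (a : int) (p : LP) (S : FAG) (m : int) :
    equivLP p x -> fmult x S m -> fmult x ((a, p) :: S) (a + m)
| fm_out (a : int) (p : LP) (S : FAG) (m : int) :
    ~ equivLP p x -> fmult x S m -> fmult x ((a, p) :: S) m.

Definition fzero (S : FAG) : Prop := forall (x : LP) (m : int), fmult x S m -> m = 0.

Definition fscale (c : int) (S : FAG) : FAG := [seq (c * t.1, t.2) | t <- S].

(* Endpoints are natural-number positions on the circle; increasing position
   means counterclockwise.  A chord goes from its tail (overcrossing) to its
   head (undercrossing); [csign] is true for writhe +1, false for -1. *)
Record chord := Chord { ctail : nat; chead : nat; csign : bool }.

Definition wr (c : chord) : int := if csign c then 1 else -1.

(* x lies on the open counterclockwise arc from a to b;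
   for a chord c = (a -> b) this arc is the right-hand side of c. *)
Definition inarc (a b x : nat) : bool :=
  if (a < b)%N then (a < x)%N && (x < b)%N else (a < x)%N || (x < b)%N.

Definition on_right (c : chord) (x : nat) : bool := inarc (ctail c) (chead c) x.

Definition crossLR (c d : chord) : bool := ~~ on_right c (ctail d) && on_right c (chead d).
Definition crossRL (c d : chord) : bool := on_right c (ctail d) && ~~ on_right c (chead d).

(* A Gauss diagram (all crossings real) is a list of chords. *)
Definition GD := seq chord.

Definition Ind (D : GD) (c : chord) : int :=
  \sum_(d <- D | crossLR c d) wr d - \sum_(d <- D | crossRL c d) wr d.

Definition writhe (D : GD) : int := \sum_(c <- D) wr c.

(* phi: reduction mod N into {0..N-1} if N >= 1, identity if N = 0
   (mathcomp's modz satisfies (x %% 0)%Z = x). *)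
Definition phi (N : int) (x : int) : int := if N == 0 then x else (x %% N)%Z.

Definition g_poly (D : GD) (c : chord) : LP :=
  let N := `|Ind D c| in
  [seq (wr r, phi N (Ind D r)) | r <- D & crossLR c r] ++
  [seq (- wr l, phi N (- Ind D l)) | l <- D & crossRL c l].

Definition F_inv (D : GD) : FAG :=
  [seq (wr c, g_poly D c) | c <- D] ++ [:: (- writhe D, [::] : LP)].

(* Singular chords are directed so that the tail is the overcrossing strand of
   the positive resolution; their [csign] field is ignored. *)
Record SGD := SGauss { real_ch : seq chord; sing_ch : seq chord }.

Definition endpoints (D : SGD) : seq nat :=
  flatten [seq [:: ctail c; chead c] | c <- real_ch D ++ sing_ch D].

Definition valid_SGD (D : SGD) : bool := uniq (endpoints D).

(* resolution: b = false -> positive crossing, b = true -> negative crossing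
   (crossing change reverses the chord and flips the sign). *)
Definition resolve_chord (c : chord) (b : bool) : chord :=
  if b then Chord (chead c) (ctail c) false else Chord (ctail c) (chead c) true.

Definition dchord := Chord 0 0 true.

Definition resolve (D : SGD) (sigma : {ffun 'I_(size (sing_ch D)) -> bool}) : GD :=
  real_ch D ++ [seq resolve_chord (nth dchord (sing_ch D) i) (sigma i)
               | i : 'I_(size (sing_ch D)) <- enum 'I_(size (sing_ch D))].

Arguments resolve : clear implicits.

Definition alt_sum (f : GD -> FAG) (D : SGD) : FAG :=
  flatten [seq fscale ((-1) ^+ #|[pred i | sigma i]|) (f (resolve D sigma))
          | sigma : {ffun 'I_(size (sing_ch D)) -> bool}].

Definition finite_type_le (f : GD -> FAG) (n : nat) : Prop :=
  forall D : SGD, valid_SGD D -> size (sing_ch D) = n.+1 -> fzero (alt_sum f D).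

Definition finite_type_degree (f : GD -> FAG) (n : nat) : Prop :=
  finite_type_le f n /\ forall m : nat, (m < n)%N -> ~ finite_type_le f m.

From mathcomp Require Import all_boot all_order all_algebra.
From mathcomp Require Import zify ring boolp.
Set Implicit Arguments. Unset Strict Implicit. Unset Printing Implicit Defensive.
Import Order.TTheory GRing.Theory Num.Theory.
Local Open Scope ring_scope.

(* Every coefficient of F_K is a sum over the chords c of w(c) ([g_c ~ x] - [0 ~ x]).
   Reversing a chord e (a crossing change) leaves the index of every other chord
   unchanged, negates the index of e, and moves e between the left-to-right and
   right-to-left crossers of every chord, so each g_c keeps its coefficients.
   Hence, for two singular chords, the coefficient of each class in F_(K_sigma) has
   the form C + u(sigma_1) + v(sigma_2), whose second difference vanishes.
   Degree 0 fails for two interleaved chords, one of them singular: in both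
   resolutions every chord has nonzero index, so the coefficient of t^[0] is -w(K),
   and the two writhes differ. *)

Local Notation rc := resolve_chord.

Definition fcoef (x : LP) (S : FAG) : int := \sum_(t <- S) t.1 *+ `[< equivLP t.2 x >].

Lemma fmultE x S m : fmult x S m -> m = fcoef x S.
Proof.
elim=> [|a p {}S {}m px _ ->|a p {}S {}m px _ ->]; rewrite /fcoef ?big_nil ?big_cons //=.
  by rewrite asboolT.
by rewrite asboolF // add0r.
Qed.

Lemma fcoefP x S : fmult x S (fcoef x S).
Proof.
elim: S => [|[a p] S IH]; first by rewrite /fcoef big_nil; exact: fm_nil.
rewrite /fcoef big_cons /=; case: asboolP => px; first exact: fm_in.
by rewrite add0r; apply: fm_out.
Qed.

Lemma fzeroP S : fzero S <-> forall x, fcoef x S = 0.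
Proof.
split=> [S0 x|S0 x m /fmultE ->]; last exact: S0.
exact: S0 (fcoefP x S).
Qed.

Lemma fcoef_cat x S T : fcoef x (S ++ T) = fcoef x S + fcoef x T.
Proof. exact: big_cat. Qed.

Lemma fcoef_fscale x c S : fcoef x (fscale c S) = c * fcoef x S.
Proof. by rewrite /fcoef big_map mulr_sumr; apply: eq_bigr => t _; rewrite mulrnAr. Qed.

Lemma fcoef_flatten (T : Type) x (F : T -> FAG) s :
  fcoef x (flatten (map F s)) = \sum_(i <- s) fcoef x (F i).
Proof.
elim: s => [|i s IH]; first by rewrite big_nil /fcoef big_nil.
by rewrite big_cons -IH -fcoef_cat.
Qed.

Lemma fcoef_alt_sum f D x :
  fcoef x (alt_sum f D) =
  \sum_(s : {ffun 'I_(size (sing_ch D)) -> bool})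
     (-1) ^+ #|[pred i | s i]| * fcoef x (f (resolve D s)).
Proof.
by rewrite fcoef_flatten big_enum; apply: eq_bigr => s _; rewrite fcoef_fscale.
Qed.

Definition ffun2 (T : Type) (a b : T) : {ffun 'I_2 -> T} :=
  [ffun i => if i == ord0 then a else b].

Lemma sum_ffun_ord1 (R : nmodType) (T : finType) (F : {ffun 'I_1 -> T} -> R) :
  \sum_s F s = \sum_(a : T) F [ffun=> a].
Proof.
rewrite (reindex (fun a : T => [ffun=> a])) //.
exists (fun s : {ffun 'I_1 -> T} => s ord0) => [a _|s _]; first by rewrite ffunE.
by apply/ffunP => i; rewrite ffunE (ord1 i).
Qed.

Lemma sum_ffun_ord2 (R : nmodType) (T : finType) (F : {ffun 'I_2 -> T} -> R) :
  \sum_s F s = \sum_(a : T) \sum_(b : T) F (ffun2 a b).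
Proof.
rewrite pair_big /= (reindex (fun p : T * T => ffun2 p.1 p.2)) //.
exists (fun s : {ffun 'I_2 -> T} => (s ord0, s ord_max)) => [[a b] _|s _].
  by rewrite !ffunE.
apply/ffunP => i; rewrite ffunE; case: ifP => [/eqP -> //|i0].
by congr (s _); apply: val_inj; case: i i0 => [[|[|n]] //= _].
Qed.

Lemma fcoef_alt_sum1 f r c x :
  fcoef x (alt_sum f (SGauss r [:: c])) =
  fcoef x (f (r ++ [:: rc c false])) - fcoef x (f (r ++ [:: rc c true])).
Proof.
rewrite fcoef_alt_sum sum_ffun_ord1 big_bool addrC.
have cardE b : #|[pred i | ([ffun=> b] : {ffun 'I_1 -> bool}) i]| = b :> nat.
  by rewrite -sum1_card big_mkcond big_ord1 inE ffunE; case: b.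
by rewrite !cardE /resolve /= enum_ordSl enum_ord0 /= !ffunE mulN1r mul1r.
Qed.

Lemma resolve_two r c1 c2 a b :
  resolve (SGauss r [:: c1; c2]) (ffun2 a b) = r ++ [:: rc c1 a; rc c2 b].
Proof. by rewrite /resolve /= !enum_ordSl enum_ord0 /= !ffunE. Qed.

Lemma fcoef_alt_sum2 f r c1 c2 x :
  fcoef x (alt_sum f (SGauss r [:: c1; c2])) =
  \sum_(a : bool) \sum_(b : bool)
     (-1) ^+ (a + b)%N * fcoef x (f (r ++ [:: rc c1 a; rc c2 b])).
Proof.
rewrite fcoef_alt_sum sum_ffun_ord2; apply: eq_bigr => a _; apply: eq_bigr => b _.
have -> : #|[pred i | ffun2 a b i]| = (a + b)%N.
  by rewrite -sum1_card big_mkcond big_ord_recr big_ord1 !inE !ffunE; case: a; case: b.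
by rewrite resolve_two.
Qed.

Definition ends (c : chord) : seq nat := [:: ctail c; chead c].

Definition ends_of (D : GD) : seq nat := flatten (map ends D).

Lemma ends_of_cons d D : ends_of (d :: D) = ends d ++ ends_of D.
Proof. by []. Qed.

Lemma ends_of_cat p q : ends_of (p ++ q) = ends_of p ++ ends_of q.
Proof. by rewrite /ends_of map_cat flatten_cat. Qed.

Definition flip_chord (c : chord) : chord := Chord (chead c) (ctail c) (~~ csign c).

Lemma flip_chordK : involutive flip_chord.
Proof. by case=> a b s; rewrite /flip_chord /= negbK. Qed.

Lemma wr_flip d : wr (flip_chord d) = - wr d.
Proof. by rewrite /wr /=; case: csign. Qed.

Lemma crossLR_flip c d : crossLR c (flip_chord d) = crossRL c d.
Proof. by rewrite /crossLR /crossRL andbC. Qed.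

Lemma crossRL_flip c d : crossRL c (flip_chord d) = crossLR c d.
Proof. by rewrite /crossLR /crossRL andbC. Qed.

Definition ind_contrib (c d : chord) : int :=
  (if crossLR c d then wr d else 0) - (if crossRL c d then wr d else 0).

Lemma IndE D c : Ind D c = \sum_(d <- D) ind_contrib c d.
Proof. by rewrite /Ind (big_mkcond (crossLR c)) (big_mkcond (crossRL c)) -sumrB. Qed.

Lemma Ind_cons d D c : Ind (d :: D) c = ind_contrib c d + Ind D c.
Proof. by rewrite !IndE big_cons. Qed.

Lemma Ind_cat p q c : Ind (p ++ q) c = Ind p c + Ind q c.
Proof. by rewrite !IndE big_cat. Qed.

Lemma ind_contrib_flipr c d : ind_contrib c (flip_chord d) = ind_contrib c d.
Proof.
rewrite /ind_contrib crossLR_flip crossRL_flip wr_flip.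
by case: (crossLR c d); case: (crossRL c d); lia.
Qed.

Lemma ind_contrib_self e : ind_contrib e e = 0.
Proof.
rewrite /ind_contrib /crossLR /crossRL /on_right /inarc.
by case: ltnP => _; rewrite !ltnn /= subrr.
Qed.

Lemma ind_contrib_flip_self e : ind_contrib (flip_chord e) e = 0.
Proof. by rewrite -{2}(flip_chordK e) ind_contrib_flipr ind_contrib_self. Qed.

Lemma on_right_flip e x :
  uniq (x :: ends e) -> on_right (flip_chord e) x = ~~ on_right e x.
Proof. by rewrite /on_right /inarc /= !inE; case: ltngtP => /=; lia. Qed.

Lemma ind_contrib_flipl e d :
  uniq (ends e ++ ends d) -> ind_contrib (flip_chord e) d = - ind_contrib e d.
Proof.
move=> U; have [Ut Uh] : uniq (ctail d :: ends e) /\ uniq (chead d :: ends e).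
  by move: U; rewrite /= !inE; lia.
rewrite /ind_contrib /crossLR /crossRL !on_right_flip //.
by case: (on_right e (ctail d)); case: (on_right e (chead d)) => /=; lia.
Qed.

Lemma Ind_flipl D e :
  uniq (ends e ++ ends_of D) -> Ind D (flip_chord e) = - Ind D e.
Proof.
elim: D => [|d D IH] U; first by rewrite /Ind !big_nil !subrr oppr0.
have Ud : uniq (ends e ++ ends d).
  by move: U; rewrite ends_of_cons catA cat_uniq => /andP[].
have UD : uniq (ends e ++ ends_of D).
  by move: U; rewrite ends_of_cons uniq_catCA cat_uniq => /and3P[].
by rewrite !Ind_cons IH // ind_contrib_flipl // [RHS]opprD.
Qed.

Lemma Ind_flipr p e q c : Ind (p ++ flip_chord e :: q) c = Ind (p ++ e :: q) c.
Proof. by rewrite !Ind_cat !Ind_cons ind_contrib_flipr. Qed.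

Lemma Ind_flip_self p e q :
  uniq (ends_of (p ++ e :: q)) ->
  Ind (p ++ e :: q) (flip_chord e) = - Ind (p ++ e :: q) e.
Proof.
rewrite ends_of_cat ends_of_cons uniq_catCA -ends_of_cat => U.
rewrite !Ind_cat !Ind_cons ind_contrib_flip_self ind_contrib_self !add0r.
by rewrite -!Ind_cat Ind_flipl.
Qed.

Definition g_contrib (N : int) (c : chord) (E : int) (d : chord) (i : int) : int :=
  (if crossLR c d && (phi N i == E) then wr d else 0) +
  (if crossRL c d && (phi N (- i) == E) then - wr d else 0).

Lemma lcoef_g_poly D c E :
  lcoef (g_poly D c) E = \sum_(d <- D) g_contrib `|Ind D c| c E d (Ind D d).
Proof.
rewrite /g_contrib big_split /= -!big_mkcond.
by rewrite /lcoef /g_poly big_cat !big_map !big_filter_cond.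
Qed.

Lemma ev1_g_poly D c : ev1 (g_poly D c) = Ind D c.
Proof. by rewrite /ev1 /g_poly big_cat !big_map !big_filter /= sumrN. Qed.

Lemma g_contrib_flip N c E e i :
  g_contrib N c E (flip_chord e) (- i) = g_contrib N c E e i.
Proof. by rewrite /g_contrib crossLR_flip crossRL_flip wr_flip !opprK addrC. Qed.

Lemma lcoef_g_poly_flip p e q c E :
  uniq (ends_of (p ++ e :: q)) ->
  lcoef (g_poly (p ++ flip_chord e :: q) c) E = lcoef (g_poly (p ++ e :: q) c) E.
Proof.
move=> U; rewrite !lcoef_g_poly Ind_flipr.
under eq_bigr do rewrite Ind_flipr.
by rewrite !big_cat !big_cons Ind_flip_self // g_contrib_flip.
Qed.

Lemma ev1_g_poly_flip p e q c :
  ev1 (g_poly (p ++ flip_chord e :: q) c) = ev1 (g_poly (p ++ e :: q) c).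
Proof. by rewrite !ev1_g_poly Ind_flipr. Qed.

Lemma equivLP_congr p q x :
  (forall e, lcoef p e = lcoef q e) -> ev1 p = ev1 q ->
  equivLP p x <-> equivLP q x.
Proof.
move=> pq ev1pq; rewrite /equivLP ev1pq.
by split=> -[-> [h hE]]; split=> //; exists h => e; rewrite ?pq // -pq.
Qed.

Definition chord_weight (x : LP) (D : GD) (c : chord) : int :=
  wr c * (`[< equivLP (g_poly D c) x >]%:R - `[< equivLP [::] x >]%:R).

Lemma fcoef_F_inv x D : fcoef x (F_inv D) = \sum_(c <- D) chord_weight x D c.
Proof.
rewrite fcoef_cat /fcoef big_map big_cons big_nil addr0 /= /writhe.
rewrite -mulr_natr mulNr mulr_suml -sumrB.
by apply: eq_bigr => c _; rewrite /chord_weight mulrBr !mulr_natr.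
Qed.

Lemma chord_weight_flip x p e q c :
  uniq (ends_of (p ++ e :: q)) ->
  chord_weight x (p ++ flip_chord e :: q) c = chord_weight x (p ++ e :: q) c.
Proof.
move=> U; congr (_ * ((nat_of_bool _)%:R - _)); apply: asbool_equiv_eq.
by apply: equivLP_congr => [E|]; [exact: lcoef_g_poly_flip | exact: ev1_g_poly_flip].
Qed.

Lemma perm_ends_of_map (T : Type) (f g : T -> chord) s :
  (forall t, perm_eq (ends (f t)) (ends (g t))) ->
  perm_eq (ends_of (map f s)) (ends_of (map g s)).
Proof. by move=> fg; elim: s => //= t s IH; rewrite !ends_of_cons perm_cat. Qed.

Lemma perm_ends_resolve_chord c b : perm_eq (ends (rc c b)) (ends c).
Proof. by case: b => //; rewrite /ends /= (perm_catC [:: _] [:: _]). Qed.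

Lemma uniq_ends_resolve D s : valid_SGD D -> uniq (ends_of (resolve D s)).
Proof.
rewrite /valid_SGD => VD; rewrite -(perm_uniq (_ : perm_eq (endpoints D) _)) //.
rewrite /endpoints -/(ends_of _) !ends_of_cat perm_cat2l.
have singE : sing_ch D =
    [seq nth dchord (sing_ch D) i | i : 'I_(size (sing_ch D)) <- enum 'I_(size (sing_ch D))].
  by rewrite (map_comp (nth dchord (sing_ch D)) val) val_enum_ord; exact/esym/mkseq_nth.
by rewrite {1}singE perm_sym; apply: perm_ends_of_map => i; exact: perm_ends_resolve_chord.
Qed.

Lemma second_difference_additive (R : comPzRingType) (C : R) (u v : bool -> R) :
  \sum_(a : bool) \sum_(b : bool) (-1) ^+ (a + b)%N * (C + u a + v b) = 0.
Proof. by rewrite !big_bool /=; ring. Qed.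

Section TwoSingularChords.

Variables (r : GD) (c1 c2 : chord) (x : LP).

Hypothesis VD : valid_SGD (SGauss r [:: c1; c2]).

Let K a b := r ++ [:: rc c1 a; rc c2 b].

Lemma uniq_ends_K a b : uniq (ends_of (K a b)).
Proof. by rewrite /K -resolve_two; exact: uniq_ends_resolve. Qed.

Lemma chord_weight_K1 a b c : chord_weight x (K a b) c = chord_weight x (K false b) c.
Proof.
case: a => //.
exact: (@chord_weight_flip x r (rc c1 false) [:: rc c2 b] c (uniq_ends_K false b)).
Qed.

Lemma chord_weight_K2 a b c : chord_weight x (K a b) c = chord_weight x (K a false) c.
Proof.
case: b => //; have := @chord_weight_flip x (r ++ [:: rc c1 a]) (rc c2 false) [::] c.
by rewrite -!catA; apply; exact: uniq_ends_K.
Qed.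

Lemma fcoef_F_inv_K a b :
  fcoef x (F_inv (K a b)) =
  \sum_(c <- r) chord_weight x (K false false) c
  + chord_weight x (K a false) (rc c1 a) + chord_weight x (K false b) (rc c2 b).
Proof.
rewrite fcoef_F_inv big_cat !big_cons big_nil /= addr0 addrA.
rewrite (chord_weight_K2 a b (rc c1 a)) (chord_weight_K1 a b (rc c2 b)).
by congr (_ + _ + _); apply: eq_bigr => c _; rewrite chord_weight_K1 chord_weight_K2.
Qed.

Lemma fcoef_alt_sum_F_inv2 : fcoef x (alt_sum F_inv (SGauss r [:: c1; c2])) = 0.
Proof.
rewrite fcoef_alt_sum2; under eq_bigr do under eq_bigr do rewrite fcoef_F_inv_K.
exact: second_difference_additive.
Qed.

End TwoSingularChords.

Lemma finite_type_le1_F_inv : finite_type_le F_inv 1.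
Proof.
move=> [r [|c1 [|c2 [|? ?]]]] VD //= _; apply/fzeroP => x.
exact: fcoef_alt_sum_F_inv2.
Qed.

Lemma chord_weight_nil D c : Ind D c != 0 -> chord_weight [::] D c = - wr c.
Proof.
move=> Dc; have nil_nil : equivLP [::] [::].
  by split=> //; exists [::] => e; rewrite /lcoef !big_nil.
have gD : ~ equivLP (g_poly D c) [::].
  by case; rewrite ev1_g_poly /ev1 big_nil => /eqP; rewrite (negbTE Dc).
by rewrite /chord_weight (asboolT nil_nil) (asboolF gD) sub0r mulrN1.
Qed.

Lemma not_finite_type_le0_F_inv : ~ finite_type_le F_inv 0.
Proof.
(* the resolutions have writhes 2 and 0 *)
pose D := SGauss [:: Chord 1 3 true] [:: Chord 0 2 true].
move=> /(_ D erefl erefl)/fzeroP/(_ [::]).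
rewrite fcoef_alt_sum1 !fcoef_F_inv !big_cons !big_nil /= !chord_weight_nil /wr /=; first lia.
all: by rewrite !Ind_cons /Ind !big_nil.
Qed.

Theorem proposition5p5 : finite_type_degree F_inv 1.
Proof.
split; first exact: finite_type_le1_F_inv.
by case=> // _; exact: not_finite_type_le0_F_inv.
Qed.
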